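(* Fix a constant $p>0$. Let $q(n,\ell)$ be any function with $q(n,\ell)/(\ell n)\to 0$ as $n,\ell\to\infty$ (i.e., for every $\varepsilon>0$ there is $N$ such that $q(n,\ell)\le \varepsilon \ell n$ whenever $n,\ell\ge N$). Then there is no randomized algorithm that, for every tournament $T$ on $n$ vertices whose champions lose $\ell$ matches, performs at most $q(n,\ell)$ arc lookups and outputs a champion of $T$ with probability at least $p$.
   Context: A tournament $T=(V,E)$ is an oriented complete graph: for every pair of distinct vertices $u,v$ exactly one of $(u,v)$, $(v,u)$ is in $E$; $(u,v)\in E$ means ''$u$ beats $v$''. An arc lookup is a query that, given distinct $u,v$, reveals the orientation of the arc between them. A champion (Copeland winner) is a vertex of maximum out-degree, i.e., one losing the fewest matches; $\ell$ denotes the number of matches it loses. A randomized algorithm may use internal random coins; the probability is over these coins, and the success guarantee must hold for every input tournament. *)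

From HB Require Import structures.
From mathcomp Require Import all_boot all_order all_algebra.
From mathcomp Require Import reals.
Set Implicit Arguments. Unset Strict Implicit. Unset Printing Implicit Defensive.
Import Order.TTheory GRing.Theory Num.Theory.

(* A tournament on vertex set 'I_n: [T u v] means "u beats v".
   Irreflexive, and for distinct u v exactly one of T u v, T v u holds. *)
Definition is_tournament (n : nat) (T : rel 'I_n) : Prop :=
  (forall u, ~~ T u u) /\ (forall u v, u != v -> T u v = ~~ T v u).

Definition outdeg (n : nat) (T : rel 'I_n) (v : 'I_n) : nat :=
  #|[pred u | T v u]|.

Definition champion (n : nat) (T : rel 'I_n) (v : 'I_n) : bool :=
  [forall u, outdeg T u <= outdeg T v].

(* number of matches lost by a champion: (n-1) - maximum out-degree *)
Definition ell (n : nat) (T : rel 'I_n) : nat :=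
  (n.-1 - \max_(v : 'I_n) outdeg T v)%N.

(* Deterministic arc-lookup algorithm = decision tree.
   [Query u v l r] looks up the arc between u and v and continues with l if
   u beats v, with r otherwise; [Leaf v] outputs v. *)
Inductive dtree (n : nat) : Type :=
| Leaf of 'I_n
| Query of 'I_n & 'I_n & dtree n & dtree n.

Fixpoint run (n : nat) (t : dtree n) (T : rel 'I_n) : 'I_n * nat :=
  match t with
  | Leaf v => (v, 0%N)
  | Query u v l r =>
      let res := run (if T u v then l else r) T in (res.1, res.2.+1)
  end.

(* Randomized algorithm on n vertices: a probability distribution (finitely
   supported) over deterministic decision trees (the internal coins select
   the tree). *)
Record rand_alg (R : realType) (n : nat) := RandAlg {
  ra_k : nat;
  ra_w : 'I_ra_k -> R;
  ra_tree : 'I_ra_k -> dtree n;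
  ra_w_ge0 : forall i, (0 <= ra_w i)%R;
  ra_w_sum : (\sum_(i < ra_k) ra_w i = 1)%R
}.
Arguments ra_k {R n} r.
Arguments ra_w {R n} r i.
Arguments ra_tree {R n} r i.

Definition succ_prob (R : realType) (n : nat) (A : rand_alg R n) (T : rel 'I_n) : R :=
  (\sum_(i < ra_k A | champion T (run (ra_tree A i) T).1) ra_w A i)%R.

Definition lookups_le (R : realType) (n : nat) (A : rand_alg R n) (T : rel 'I_n) (b : R) : Prop :=
  forall i : 'I_(ra_k A), ((run (ra_tree A i) T).2%:R <= b)%R.

From HB Require Import structures.
From mathcomp Require Import all_boot all_order all_algebra.
From mathcomp Require Import reals.
From mathcomp Require Import zify lra.
Import Order.TTheory GRing.Theory Num.Theory.
Set Implicit Arguments. Unset Strict Implicit. Unset Printing Implicit Defensive.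

(* Yao's principle with a hard distribution. Start from the regular rotational
   tournament T on 2m+1 vertices (every vertex wins m matches) and reverse a
   uniformly random arc (a, b): now b is the unique champion, with m+1 wins,
   and champions lose m-1 matches. A decision tree that never looks up the
   reversed arc runs exactly as on T and outputs a fixed vertex w, so it is
   correct only for the at most 2m+1 arcs ending at w; a tree making k lookups
   on T is therefore correct on at most 2k + 2m+1 of the m(2m+1) reversals.
   With k <= q(2m+1, m) = o(m^2) the success probability averaged over the
   reversals tends to 0, so it eventually drops below p. *)

Section Tournaments.
Variable n : nat.
Implicit Types (T : rel 'I_n) (a b u v w : 'I_n).

Definition arcs T : {set 'I_n * 'I_n} := [set e | T e.1 e.2].

Lemma card_arcs T : #|arcs T| = \sum_v outdeg T v.
Proof.
rewrite -sum1_card (eq_bigl (fun e => T e.1 e.2)) => [|e]; last by rewrite inE.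
by rewrite -(pair_big_dep predT T (fun _ _ => 1%N)); apply: eq_bigr => v _; rewrite sum1_card.
Qed.

Lemma ell_regular T d : (forall v, outdeg T v = d) -> ell T = n.-1 - d.
Proof.
move=> reg; rewrite /ell; case: (posnP n) => [n0|n_gt0].
  by have -> : n.-1 = 0 by rewrite n0.
congr (_ - _); apply/eqP; rewrite eqn_leq; apply/andP; split.
  by apply/bigmax_leqP => v _; rewrite reg.
by rewrite -(reg (Ordinal n_gt0)) leq_bigmax.
Qed.

Lemma tournament_arc_neq T a b : is_tournament T -> T a b -> a != b.
Proof. by case=> irrT _ Tab; apply: contraTneq Tab => ->; rewrite irrT. Qed.

Definition reverse_arc T a b : rel 'I_n :=
  fun u v => if ((u, v) == (a, b)) || ((u, v) == (b, a)) then ~~ T u v else T u v.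

Lemma reverse_arc_tournament T a b :
  is_tournament T -> a != b -> is_tournament (reverse_arc T a b).
Proof.
move=> [irrT antiT] ab; split=> [u|u v uv]; rewrite /reverse_arc.
  case: ifP => [|_]; last exact: irrT.
  by rewrite !xpair_eqE => /orP[]/andP[/eqP ua /eqP ub]; rewrite -ua -ub eqxx in ab.
rewrite [((v, u) == _) || _]orbC !xpair_eqE [(u == b) && _]andbC [(u == a) && _]andbC.
by case: ifP => _; rewrite antiT.
Qed.

Lemma outdeg_reverse_arc_other T a b v :
  v != a -> v != b -> outdeg (reverse_arc T a b) v = outdeg T v.
Proof.
move=> va vb; apply: eq_card => u.
by rewrite !inE /reverse_arc !xpair_eqE (negbTE va) (negbTE vb).
Qed.

Lemma outdeg_reverse_arc_tail T a b :
  a != b -> T a b -> outdeg (reverse_arc T a b) a = (outdeg T a).-1.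
Proof.
move=> ab Tab; rewrite /outdeg [in RHS](cardD1 b) inE Tab add1n /=.
apply: eq_card => u; rewrite !inE /reverse_arc !xpair_eqE eqxx (negbTE ab) orbF /=.
by case: (eqVneq u b) => [->|]; rewrite ?Tab.
Qed.

Lemma outdeg_reverse_arc_head T a b :
  is_tournament T -> a != b -> T a b -> outdeg (reverse_arc T a b) b = (outdeg T b).+1.
Proof.
move=> [_ antiT] ab Tab; have Tba : ~~ T b a by rewrite -antiT // eq_sym.
rewrite /outdeg; have := cardU1 a [pred u | T b u]; rewrite inE Tba add1n => <-.
apply: eq_card => u; rewrite !inE /reverse_arc !xpair_eqE eqxx (eq_sym b a) (negbTE ab) /=.
by case: (eqVneq u a) => [->|]; rewrite ?Tba.
Qed.

Lemma champion_reverse_arc_regular T a b d w :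
  is_tournament T -> (forall v, outdeg T v = d) -> T a b ->
  champion (reverse_arc T a b) w -> w = b.
Proof.
move=> tourT reg Tab /forallP /(_ b).
have ab := tournament_arc_neq tourT Tab.
rewrite outdeg_reverse_arc_head // reg.
case: (eqVneq w a) => [->|wa]; first by rewrite outdeg_reverse_arc_tail // reg ltnNge leq_pred.
by case: (eqVneq w b) => [//|wb]; rewrite outdeg_reverse_arc_other // reg ltnn.
Qed.

Fixpoint queries (t : dtree n) T : seq ('I_n * 'I_n) :=
  match t with
  | Leaf _ => [::]
  | Query u v l r => (u, v) :: queries (if T u v then l else r) T
  end.

Lemma size_queries (t : dtree n) T : size (queries t T) = (run t T).2.
Proof. by elim: t => [//|u v l IHl r IHr] /=; case: (T u v); rewrite ?IHl ?IHr. Qed.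

Lemma run_eq_on_queries (t : dtree n) T T' :
  {in queries t T, forall e, T' e.1 e.2 = T e.1 e.2} -> run t T' = run t T.
Proof.
elim: t => [//|u v l IHl r IHr] /= agree.
have -> : T' u v = T u v by apply: (agree (u, v)); rewrite inE eqxx.
have agree' : {in queries (if T u v then l else r) T, forall e, T' e.1 e.2 = T e.1 e.2}.
  by move=> e qe; apply: agree; rewrite inE qe orbT.
by case: (T u v) agree' => [/IHl|/IHr] ->.
Qed.

Lemma run_reverse_arc_unqueried (t : dtree n) T a b :
  (a, b) \notin queries t T -> (b, a) \notin queries t T ->
  run t (reverse_arc T a b) = run t T.
Proof.
move=> abq baq; apply: run_eq_on_queries => -[u v] uvq /=; rewrite /reverse_arc.
by case: ifP => // /orP[]/eqP E; rewrite -E uvq in abq baq.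
Qed.

Lemma card_reverse_arc_successes (t : dtree n) T d :
  is_tournament T -> (forall v, outdeg T v = d) ->
  #|[set e in arcs T | champion (reverse_arc T e.1 e.2) (run t (reverse_arc T e.1 e.2)).1]|
    <= (run t T).2.*2 + n.
Proof.
move=> tourT reg; set s := queries t T.
pose swap (e : 'I_n * 'I_n) := (e.2, e.1).
have swap_inj : injective swap by apply: (can_inj (g := swap)) => -[].
pose Q := [set e | e \in s].
have cover : [set e in arcs T | champion (reverse_arc T e.1 e.2) (run t (reverse_arc T e.1 e.2)).1]
    \subset Q :|: swap @^-1: Q :|: setX [set: 'I_n] [set (run t T).1].
  apply/subsetP => -[a b]; rewrite !inE /= => /andP [Tab champ].
  case abq: ((a, b) \in s) => //=; case baq: ((b, a) \in s) => //=.
  rewrite run_reverse_arc_unqueried ?abq ?baq // in champ.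
  by rewrite (champion_reverse_arc_regular tourT reg Tab champ).
apply: leq_trans (subset_leq_card cover) _.
rewrite -addnn -size_queries -/s; apply: leq_trans (leq_card_setU _ _) _.
rewrite cardsX cardsT card_ord cards1 muln1 leq_add2r; apply: leq_trans (leq_card_setU _ _) _.
by rewrite card_preimset // leq_add // cardsE card_size.
Qed.

End Tournaments.

Lemma card_ord_pred N (P : pred nat) : #|[pred k : 'I_N | P k]| = count P (iota 0 N).
Proof. by rewrite cardE /enum_mem size_filter -enumT -val_enum_ord count_map. Qed.

Lemma card_ord_between m N : m < N -> #|[pred k : 'I_N | 0 < k <= m]| = m.
Proof.
move=> mN; rewrite (card_ord_pred _ (fun k => 0 < k <= m)) -(subnKC mN) /= iotaD count_cat.
have -> : count (fun k => 0 < k <= m) (iota 1 m) = m.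
  by rewrite -[RHS](size_iota 1) -count_predT; apply: eq_in_count => k; rewrite mem_iota add1n ltnS.
rewrite add1n; suff -> : count (fun k => 0 < k <= m) (iota m.+1 (N - m.+1)) = 0 by rewrite addn0.
apply/eqP; rewrite eqn0Ngt -has_count; apply/hasPn => k; rewrite mem_iota => /andP [mk _].
by move: mk; rewrite ltnNge => /negbTE ->; rewrite andbF.
Qed.

Lemma val_oppZp n (x : 'I_n.+1) : x != 0%R -> val (- x)%R = n.+1 - x.
Proof. by move=> x0; rewrite /= modn_small // ltn_subrL lt0n x0. Qed.

Definition rot_tournament m : rel 'I_(m.*2).+1 := fun u v => 0 < (v - u)%R <= m.
Arguments rot_tournament : clear implicits.

Lemma rot_gap_opp m k :
  0 < k < (m.*2).+1 -> (0 < (m.*2).+1 - k <= m) = ~~ (0 < k <= m).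
Proof.
rewrite -addnn => /andP [k_gt0 k_lt].
by apply/idP/idP => [/andP [_ le_m]|gap]; [apply/negP => /andP [_ le_m'] | apply/andP; split]; lia.
Qed.

Lemma rot_tournament_is_tournament m : is_tournament (rot_tournament m).
Proof.
split=> [u|u v uv]; first by rewrite /rot_tournament subrr.
have uv0 : (u - v)%R != 0%R by rewrite subr_eq0.
by rewrite /rot_tournament -opprB val_oppZp // rot_gap_opp // ltn_ord lt0n andbT.
Qed.

Lemma outdeg_rot_tournament m u : outdeg (rot_tournament m) u = m.
Proof.
have mN : m < (m.*2).+1 by rewrite ltnS -addnn leq_addr.
rewrite -[RHS](card_ord_between mN) -cardsE.
by rewrite -(card_preimset _ (subIr u)); apply: eq_card => v; rewrite !inE.
Qed.

Local Open Scope ring_scope.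

Lemma sum_succ_prob_le (R : realType) n (A : rand_alg R n) (I : finType) (E : {set I})
    (F : I -> rel 'I_n) (B : R) :
  (forall i, #|[set e in E | champion (F e) (run (ra_tree A i) (F e)).1]|%:R <= B) ->
  \sum_(e in E) succ_prob A (F e) <= B.
Proof.
move=> bound; rewrite /succ_prob.
under eq_bigr do rewrite big_mkcond /=.
rewrite exchange_big /= -[B]mul1r -(ra_w_sum A) mulr_suml; apply: ler_sum => i _.
rewrite -big_mkcondr /= sumr_const -mulr_natr ler_wpM2l ?ra_w_ge0 //.
by apply: le_trans (bound i); rewrite cardsE.
Qed.

Lemma sum_succ_prob_reverse_arc_le (R : realType) n (A : rand_alg R n) (T : rel 'I_n) d (B : R) :
  is_tournament T -> (forall v, outdeg T v = d) -> lookups_le A T B ->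
  \sum_(e in arcs T) succ_prob A (reverse_arc T e.1 e.2) <= 2 * B + n%:R.
Proof.
move=> tourT reg cost; apply: sum_succ_prob_le => i.
apply: le_trans (_ : ((run (ra_tree A i) T).2.*2 + n)%:R <= _).
  by rewrite ler_nat; exact: card_reverse_arc_successes tourT reg.
by rewrite natrD -muln2 natrM mulrC lerD2r ler_wpM2l.
Qed.

Lemma exists_nat_ge_gt (R : realType) (N : nat) (x : R) : exists m : nat, (N <= m)%N /\ x < m%:R.
Proof.
exists (N + Num.Def.archi_bound `|x|)%N; split; first exact: leq_addr.
apply: le_lt_trans (ler_norm x) _; apply: lt_le_trans (archi_boundP (normr_ge0 x)) _.
by rewrite ler_nat leq_addl.
Qed.

Theorem theorem2 (R : realType) (p : R) (hp : 0 < p) (q : nat -> nat -> R)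
  (hq : forall eps : R, 0 < eps -> exists N : nat, forall n l : nat,
          (N <= n)%N -> (N <= l)%N -> q n l <= eps * l%:R * n%:R) :
  ~ exists A : forall n : nat, rand_alg R n.+1,
      forall (n : nat) (T : rel 'I_n.+1), is_tournament T ->
        lookups_le (A n) T (q n.+1 (ell T)) /\ p <= succ_prob (A n) T.
Proof.
move=> [A HA].
have [N HN] := hq (p / 4) (divr_gt0 hp (ltr0n _ 4)).
have [m [Nm pm]] := exists_nat_ge_gt N (2 / p).
pose T := rot_tournament m; have tourT := rot_tournament_is_tournament m.
have regT := outdeg_rot_tournament (m := m).
have ellT : ell T = m by rewrite (ell_regular regT) /= -addnn addnK.
have upper := sum_succ_prob_reverse_arc_le tourT regT (HA _ T tourT).1.
have lower : p * #|arcs T|%:R <= \sum_(e in arcs T) succ_prob (A m.*2) (reverse_arc T e.1 e.2).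
  rewrite mulr_natr -sumr_const; apply: ler_sum => -[a b]; rewrite inE => Tab.
  exact: (HA _ _ (reverse_arc_tournament tourT (tournament_arc_neq tourT Tab))).2.
rewrite card_arcs (eq_bigr _ (fun v _ => regT v)) sum_nat_const card_ord natrM in lower.
have qbound : q (m.*2).+1 m <= p / 4 * m%:R * (m.*2).+1%:R.
  by apply: HN => //; rewrite -addnn; lia.
have pm2 : 2 < p * m%:R by rewrite mulrC -ltr_pdivrMr.
have n_gt0 : 0 < (m.*2).+1%:R :> R by rewrite ltr0n.
rewrite ellT in upper; nra.
Qed.
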